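(* Let $(K,w_K)$ and $(H,w_H)$ be $(n+1)$-dimensional weighted simplicial complexes such that $(H,w_H)$ is a subcomplex of $(K,w_K)$ and their proper difference $(L,w_L)$ exists, i.e. $L=K$ as simplicial complexes, $w_L=w_K-w_H$ (with $w_H$ extended by $0$ outside $H$), and $\{F\in K:w_L(F)>0\}$ is a simplicial complex. Assume $w_K$ and $w_L$ both satisfy the normalizing condition, and denote by $\Delta^{up}_n(K)$, $\Delta^{up}_n(L)$ the corresponding (normalized) up-Laplacians $\mathcal{L}^{up}_n(K,w_K)$, $\mathcal{L}^{up}_n(L,w_L)$. Let $N=|S_n(K)|$ and let $\lambda_1\le\dots\le\lambda_N$ and $\theta_1\le\dots\le\theta_N$ be the eigenvalues of $\Delta^{up}_n(K)$ and $\Delta^{up}_n(L)$, respectively. Put $D_{\mathcal{W}}=\dim C^{n+1}(H,\mathbb{R})-\dim H^{n+1}(H,\mathbb{R})$ and $D_H=\dim C^n(H,\mathbb{R})$, with the conventions $\lambda_j=0$ for $1-D_{\mathcal{W}}\le j\le 0$ and $\lambda_j=n+2$ for $N+1\le j\le N+D_H$. Then for all $k=1,\dots,N$, $$\lambda_{k-D_{\mathcal{W}}}\le\theta_k\le\lambda_{k+D_H}.$$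
   Context: $S_j(K)$ is the set of $j$-faces; $C^j(K,\mathbb{R})$ the real cochains on oriented $j$-faces with coboundary $(\delta_j f)([v_0,\dots,v_{j+1}])=\sum_i(-1)^if([v_0,\dots,\hat v_i,\dots,v_{j+1}])$. A weight function $w:\bigcup_jS_j(K)\to[0,\infty)$ (positive for a weighted complex, zeros allowed for a degenerate one) gives $(f,g)=\sum_{F\in S_j}w(F)f([F])g([F])$ and the formal adjoint $(\delta_j^*\bar f)([F])=\sum_{\bar F\in S_{j+1},\bar F\supset F}\frac{w(\bar F)}{w(F)}\mathrm{sgn}([F],\partial[\bar F])\bar f([\bar F])$ if $w(F)\ne0$, and $0$ if $w(F)=0$, where $\mathrm{sgn}([v_0,..,\hat v_i,..,v_{j+1}],\partial[v_0,..,v_{j+1}])=(-1)^i$. $\mathcal{L}^{up}_n(K,w)=\delta_n^*\delta_n$ on $C^n$. A subcomplex $(H,w_H)$ of $(K,w_K)$ means $H\subseteq K$ a subcomplex and $w_H\le w_K$ on faces of $H$. A weight function $w$ satisfies the normalizing condition if $w(F)=\sum_{\bar F\in S_{n+1}(K),\,F\subset\bar F}w(\bar F)$ for every $F\in S_n(K)$ that is not a facet (maximal face) of $K$; the up-Laplacian for such weights is the normalized up-Laplacian $\Delta^{up}_n$. $H^{n+1}(H,\mathbb{R})$ is simplicial cohomology with real coefficients. *)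

From HB Require Import structures.
From mathcomp Require Import all_boot all_order all_algebra.
Set Implicit Arguments. Unset Strict Implicit. Unset Printing Implicit Defensive.
Import Order.TTheory GRing.Theory Num.Theory.
Local Open Scope ring_scope.

(* Vertices are 'I_m; a face is a nonempty {set 'I_m}; the oriented face
   [v_0,...,v_j] is always taken with v_0 < ... < v_j (canonical orientation),
   so a j-cochain is a function on sets (only its values on j-faces matter). *)

Section SimplicialDefs.
Variable m : nat.
Local Notation V := 'I_m.

Definition simplicial_complex (K : {set {set V}}) : Prop :=
  set0 \notin K /\
  forall F G : {set V}, F \in K -> G \subset F -> G != set0 -> G \in K.

Definition faces (K : {set {set V}}) (j : nat) : {set {set V}} :=
  [set F in K | #|F| == j.+1].

Definition dimension (K : {set {set V}}) (d : nat) : Prop :=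
  (exists2 F, F \in K & #|F| = d.+1) /\ (forall F, F \in K -> (#|F| <= d.+1)%N).

Definition is_facet (K : {set {set V}}) (F : {set V}) : Prop :=
  F \in K /\ (forall G, G \in K -> ~ (F \proper G)).

Variable R : realFieldType.

Definition weighted (K : {set {set V}}) (w : {set V} -> R) : Prop :=
  forall F, F \in K -> 0 < w F.

(* sign of v in G: (-1)^i where v is the i-th vertex of G in increasing order;
   sgn([G \ v], d[G]) = sgnv G v *)
Definition sgnv (G : {set V}) (v : V) : R :=
  (-1) ^+ #|[set u in G | (nat_of_ord u < nat_of_ord v)%N]|.

Definition cobound (f : {set V} -> R) : {set V} -> R :=
  fun G => \sum_(v in G) sgnv G v * f (G :\ v).

(* formal adjoint of the coboundary w.r.t. the weighted inner product *)
Definition cobound_adj (K : {set {set V}}) (w : {set V} -> R)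
    (g : {set V} -> R) : {set V} -> R :=
  fun F => if w F == 0 then 0 else
    \sum_(v | (v \notin F) && ((v |: F) \in K))
       w (v |: F) / w F * sgnv (v |: F) v * g (v |: F).

Definition up_laplacian (K : {set {set V}}) (w : {set V} -> R)
    (f : {set V} -> R) : {set V} -> R :=
  cobound_adj K w (cobound f).

Definition indicator (F : {set V}) : {set V} -> R :=
  fun G => if G == F then 1 else 0.

Definition up_laplacian_mx (K : {set {set V}}) (w : {set V} -> R) (n : nat)
  : 'M[R]_#|faces K n| :=
  \matrix_(a, b) up_laplacian K w (indicator (enum_val b)) (enum_val a).

(* matrix of delta_j : C^j(K) -> C^{j+1}(K), acting on row vectors *)
Definition cobound_mx (K : {set {set V}}) (j : nat)
  : 'M[R]_(#|faces K j|, #|faces K j.+1|) :=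
  \matrix_(a, b) cobound (indicator (enum_val a)) (enum_val b).

Definition cohomology_dim (K : {set {set V}}) (j : nat) : nat :=
  (\rank (kermx (cobound_mx K j)) -
   (if j is j'.+1 then \rank (cobound_mx K j') else 0))%N.

Definition normalizing (K : {set {set V}}) (w : {set V} -> R) (n : nat) : Prop :=
  forall F, F \in faces K n -> ~ is_facet K F ->
    w F = \sum_(G in faces K n.+1 | F \subset G) w G.

End SimplicialDefs.

Definition eigenvalue_list (R : realFieldType) (N : nat) (M : 'M[R]_N) (s : seq R)
  : Prop :=
  sorted <=%R s /\ char_poly M = \prod_(x <- s) ('X - x%:P).

Definition ext_eig (R : realFieldType) (n : nat) (lam : seq R) (j : int) : R :=
  match j with
  | Posz p => if p == 0%N then 0
              else if (p <= size lam)%N then nth 0 lam p.-1 else (n.+2)%:R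
  | Negz _ => 0
  end.

From HB Require Import structures.
From mathcomp Require Import all_boot all_order all_algebra all_fingroup.
From mathcomp Require Import lra ring zify.
Set Implicit Arguments. Unset Strict Implicit. Unset Printing Implicit Defensive.
Import Order.TTheory GRing.Theory Num.Theory.
Local Open Scope ring_scope.

(* The two up-Laplacians are self-adjoint for the inner products weighted by the face
   weights, with Rayleigh quotients sum_G w(G) (df)(G)^2 / sum_F w(F) f(F)^2, so the
   Courant-Fischer min-max principle compares their spectra through subspaces on which the
   quotients are comparable.  On the cochains vanishing on the n-faces of H, a subspace of
   codimension at most D_H, the numerators and denominators for K and L coincide; this gives
   theta_k <= lambda_(k+D_H).  On the cochains whose coboundary vanishes on the (n+1)-faces
   of H, a subspace of codimension at most rank d_n^H = D_W (H has no (n+2)-faces), the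
   numerators coincide and the denominator for L is the smaller one; this gives
   lambda_(k-D_W) <= theta_k.  The conventions at both ends are covered by 0 <= theta_k <= n+2,
   the upper bound following from Cauchy-Schwarz and the normalizing condition for w_L. *)

Definition qform (R : pzRingType) (N : nat) (M : 'M[R]_N) (x : 'rV[R]_N) : R :=
  (x *m M *m x^T) 0 0.

Lemma qform_diag (R : comPzRingType) N (d : 'I_N -> R) (x : 'rV[R]_N) :
  qform (diag_mx (\row_i d i)) x = \sum_i x 0 i ^+ 2 * d i.
Proof.
by rewrite /qform mul_mx_diag !mxE; apply: eq_bigr => i _; rewrite !mxE; ring.
Qed.

Lemma mulmx_trmx_row (R : pzRingType) m n (P : 'M[R]_(m, n)) (M : 'M_n) i k :
  (P *m M *m P^T) i k = (row i P *m M *m (row k P)^T) 0 0.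
Proof. by rewrite -row_mul !mxE; apply: eq_bigr => l _; rewrite !mxE. Qed.

Lemma char_poly_trmx (R : comNzRingType) N (M : 'M[R]_N) :
  char_poly M^T = char_poly M.
Proof.
rewrite /char_poly -[RHS]det_tr; congr (\det _).
rewrite /char_poly_mx linearB /= tr_scalar_mx; congr (_ - _).
by apply/matrixP => i j; rewrite !mxE.
Qed.

Lemma char_poly_similar (R : comUnitRingType) N (V B : 'M[R]_N) :
  V \in unitmx -> char_poly (invmx V *m B *m V) = char_poly B.
Proof.
move=> VU; rewrite /char_poly.
have -> : char_poly_mx (invmx V *m B *m V) =
    map_mx (@polyC R) (invmx V) *m char_poly_mx B *m map_mx (@polyC R) V.
  rewrite /char_poly_mx !map_mxM mulmxBr mulmxBl; congr (_ - _).
  by rewrite -mulmxA -scalar_mxC mulmxA -map_mxM mulVmx // map_mx1 mul1mx.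
rewrite !det_mulmx mulrC mulrA -det_mulmx -map_mxM mulmxV //.
by rewrite map_mx1 det1 mul1r.
Qed.

Lemma row_mul_pid_mx (R : pzRingType) n (y : 'rV[R]_n) k i :
  (y *m pid_mx k) 0 i = if (i < k)%N then y 0 i else 0.
Proof.
rewrite !mxE (bigD1 i) //= big1 => [|l li].
  by rewrite !mxE eqxx /= addr0; case: (i < k)%N; rewrite ?mulr1 ?mulr0.
by rewrite !mxE (_ : (l == i :> nat) = false) ?mulr0 //; exact: negbTE li.
Qed.

Lemma row_mul_copid_mx (R : pzRingType) n (y : 'rV[R]_n) k i :
  (y *m copid_mx k) 0 i = if (k <= i)%N then y 0 i else 0.
Proof.
have -> : (y *m copid_mx k) 0 i = y 0 i - (y *m pid_mx k) 0 i.
  by rewrite mulmxBr mulmx1 !mxE.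
rewrite row_mul_pid_mx.
by case: ltnP => _; rewrite ?subrr ?subr0.
Qed.

Lemma mxrank_zero_rows (R : fieldType) n (P : 'M[R]_n) j : (j <= n)%N ->
  (forall i : 'I_n, (j <= i)%N -> row i P = 0) -> (\rank P <= j)%N.
Proof.
move=> jn P0; have -> : P = pid_mx j *m P.
  apply/matrixP => i l; rewrite !mxE (bigD1 i) //= big1 => [|i' i'i]; last first.
    by rewrite !mxE (_ : (i == i' :> nat) = false) ?mul0r // eq_sym; exact/negbTE.
  rewrite !mxE eqxx /= addr0; case: ltnP => ij; first by rewrite mul1r.
  by rewrite mul0r; move/rowP: (P0 i ij) => /(_ l); rewrite !mxE.
by rewrite (leq_trans (mxrankM_maxl _ _)) // rank_pid_mx.
Qed.

Lemma stable_eigenvector (R : fieldType) N (A U : 'M[R]_N) (s : seq R) :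
  char_poly A = \prod_(x <- s) ('X - x%:P) -> stablemx U A -> U != 0 ->
  exists (v : 'rV[R]_N) (mu : R), [/\ v != 0, (v <= U)%MS & v *m A = mu *: v].
Proof.
case: N A U => [|n] A U charA stabU U0; first by rewrite thinmx0 eqxx in U0.
(* Multiplying a nonzero u in U by the factors 'X - s_i one at a time ends at 0 by
   Cayley-Hamilton; the last nonzero iterate is an eigenvector, and it stays in U. *)
set u := nz_row U.
pose v k := u *m horner_mx A (\prod_(i < k) ('X - (s`_i)%:P)).
have vS k : v k.+1 = v k *m A - s`_k *: v k.
  rewrite /v big_ord_recr /= rmorphM /= rmorphB /= horner_mx_X horner_mx_C.
  by rewrite mulmxA mulmxBr mul_mx_scalar.
have v0 : v 0%N = u by rewrite /v big_ord0 rmorph1 mulmx1.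
have vU k : (v k <= U)%MS.
  elim: k => [|k IH]; first by rewrite v0 nz_row_sub.
  rewrite vS addmx_sub ?(submx_trans (submxMr A IH)) //.
  by rewrite -scaleNr scalemx_sub.
have v_size : v (size s) = 0.
  rewrite /v; have -> : \prod_(i < size s) ('X - (s`_i)%:P) = char_poly A.
    by rewrite charA (big_nth 0) big_mkord.
  by rewrite Cayley_Hamilton mulmx0.
have [k0 vk0 kmin] := ex_minnP (ex_intro (fun k => v k == 0) _ (introT eqP v_size)).
case: k0 vk0 kmin => [|k] vk0 kmin.
  by rewrite v0 nz_row_eq0 (negbTE U0) in vk0.
exists (v k), s`_k; split => //.
  by apply/negP => /kmin; rewrite ltnn.
by apply/eqP; rewrite -subr_eq0 -vS.
Qed.

Section WeightedSpectralTheorem.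
Variables (R : realFieldType) (N : nat) (A : 'M[R]_N) (d : 'I_N -> R).
Hypothesis d_gt0 : forall i, 0 < d i.
Local Notation D := (diag_mx (\row_i d i)).
Hypothesis AD_sym : (A *m D)^T = A *m D.

Lemma qform_weight_gt0 (x : 'rV[R]_N) : x != 0 -> 0 < qform D x.
Proof.
move=> x0; have [l xl] : exists l, x 0 l != 0.
  apply/existsP; apply: contraNT x0; rewrite negb_exists => /forallP x0.
  by apply/eqP/rowP => l; rewrite mxE; apply/eqP; move: (x0 l); rewrite negbK.
have sq_ge0 i : 0 <= x 0 i ^+ 2 * d i by rewrite mulr_ge0 ?sqr_ge0 ?ltW.
rewrite qform_diag lt_def sumr_ge0 // andbT psumr_neq0 //.
by apply/hasP; exists l; rewrite ?mem_index_enum //= mulr_gt0 // exprn_even_gt0.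
Qed.

Lemma eigenrowsP (P : 'M[R]_N) (mu : 'I_N -> R) :
  P *m A = diag_mx (\row_i mu i) *m P <-> forall i, row i P *m A = mu i *: row i P.
Proof.
have rowD i : row i (diag_mx (\row_i mu i) *m P) = mu i *: row i P.
  by rewrite mul_diag_mx; apply/rowP => l; rewrite !mxE.
split => [PA i | PA]; first by rewrite -row_mul PA rowD.
by apply/row_matrixP => i; rewrite row_mul PA rowD.
Qed.

Lemma orthogonal_eigenrows (s : seq R) j :
  char_poly A = \prod_(x <- s) ('X - x%:P) -> (j <= N)%N ->
  exists (P : 'M[R]_N) (mu : 'I_N -> R),
  [/\ forall i : 'I_N, (row i P == 0) = (j <= i)%N,
      P *m A = diag_mx (\row_i mu i) *m P &
      forall i k, i != k -> (P *m D *m P^T) i k = 0].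
Proof.
move=> charA; elim: j => [_|j IH jN].
  by exists 0, (fun=> 0); split => [i|| i k _]; rewrite ?row0 ?eqxx ?mulmx0 ?mul0mx ?mxE.
have [P [mu [Prow PA PDP]]] := IH (ltnW jN).
(* The D-orthogonal complement of the rows of P is A-stable since A is D-self-adjoint. *)
pose U := kermx (P *m D)^T.
have PDt : (P *m D)^T = D *m P^T by rewrite trmx_mul tr_diag_mx.
have UPD : U *m D *m P^T = 0 by rewrite -mulmxA -PDt; exact/sub_kermxP.
have stabU : stablemx U A.
  apply/sub_kermxP; rewrite PDt !mulmxA -(mulmxA U) -AD_sym trmx_mul tr_diag_mx.
  by rewrite mulmxA -(mulmxA _ _ P^T) -trmx_mul PA trmx_mul tr_diag_mx mulmxA UPD mul0mx.
have rankP : (\rank P <= j)%N.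
  by apply: mxrank_zero_rows (ltnW jN) _ => i ij; apply/eqP; rewrite Prow.
have U0 : U != 0.
  rewrite -mxrank_eq0 mxrank_ker mxrank_tr subn_eq0 -ltnNge.
  exact: leq_ltn_trans (mxrankM_maxl _ _) (leq_ltn_trans rankP jN).
have [v [mu0 [v0 vU vA]]] := stable_eigenvector charA stabU U0.
have v_orth k : (v *m D *m (row k P)^T) 0 0 = 0.
  have vPD : v *m D *m P^T = 0 by rewrite -mulmxA -PDt; exact/sub_kermxP.
  transitivity ((v *m D *m P^T) 0 k); last by rewrite vPD mxE.
  by rewrite !mxE; apply: eq_bigr => l _; rewrite !mxE.
pose jo := Ordinal jN.
pose P' := \matrix_i (if i == jo then v else row i P).
have rowP' i : row i P' = (if i == jo then v else row i P).
  by rewrite /P' rowK.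
have P'sym : (P' *m D *m P'^T)^T = P' *m D *m P'^T.
  by rewrite !trmx_mul trmxK tr_diag_mx mulmxA.
exists P', (fun i => if i == jo then mu0 else mu i); split.
- move=> i; rewrite rowP'; case: (eqVneq i jo) => [->|ijo].
    by rewrite (negbTE v0) ltnn.
  by rewrite Prow; move: ijo; rewrite -val_eqE /=; lia.
- apply/eigenrowsP => i; rewrite rowP'; case: (i == jo) => //.
  exact: (eigenrowsP _ _).1 PA i.
suff off i k : i != k -> k != jo -> (P' *m D *m P'^T) i k = 0.
  move=> i k ik; case: (eqVneq k jo) => [kjo|]; last exact: off.
  rewrite -P'sym mxE; apply: off; first by rewrite eq_sym.
  by rewrite -kjo.
move=> ik kjo; rewrite mulmx_trmx_row !rowP' (negbTE kjo).
by case: eqP => _; [exact: v_orth | rewrite -mulmx_trmx_row PDP].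
Qed.

Theorem weighted_spectral (s : seq R) :
  char_poly A = \prod_(x <- s) ('X - x%:P) ->
  exists (Q : 'M[R]_N) (g : 'I_N -> R),
  [/\ Q \in unitmx, Q *m A = diag_mx (\row_i s`_i) *m Q,
      Q *m D *m Q^T = diag_mx (\row_i g i) & forall i, 0 < g i].
Proof.
move=> charA; have [P [mu [Prow PA PDP]]] := orthogonal_eigenrows charA (leqnn N).
pose g i := qform D (row i P).
have g_gt0 i : 0 < g i by apply: qform_weight_gt0; rewrite Prow -ltnNge.
have PDPg : P *m D *m P^T = diag_mx (\row_i g i).
  apply/matrixP => i k; rewrite [RHS]mxE; case: eqVneq => [<-|ik].
    by rewrite mulr1n [RHS]mxE mulmx_trmx_row.
  by rewrite mulr0n PDP.
have PU : P \in unitmx.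
  have gU : diag_mx (\row_i g i) \in unitmx.
    rewrite unitmxE det_diag unitfE; apply/prodf_neq0 => i _.
    by rewrite mxE; exact: lt0r_neq0.
  have : P *m (D *m P^T *m invmx (diag_mx (\row_i g i))) = 1%:M.
    by rewrite !mulmxA PDPg mulmxV.
  by case/mulmx1_unit.
have charA_mu : char_poly A = \prod_(i < N) ('X - (mu i)%:P).
  have -> : A = invmx P *m diag_mx (\row_i mu i) *m P by rewrite -mulmxA -PA mulKmx.
  rewrite char_poly_similar // char_poly_trig ?diag_mx_is_trig //.
  by apply: eq_bigr => i _; rewrite !mxE eqxx mulr1n.
have [sigma s_sigma] : exists sigma : 'S_N, forall i : 'I_N, s`_i = mu (sigma i).
  have /tuple_permP[sigma sE] : perm_eq s [tuple mu i | i < N].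
    by apply: prod_XsubC_eq; rewrite -charA charA_mu big_map big_enum.
  exists sigma => i.
  by rewrite sE /= (nth_map i) ?size_enum_ord // nth_ord_enum tnth_mktuple.
pose Q := row_perm sigma P.
have rowQ i : row i Q = row (sigma i) P by apply/rowP => l; rewrite !mxE.
exists Q, (fun i => g (sigma i)); split => //.
- by rewrite /Q row_permE unitmx_mul unitmx_perm.
- apply/eigenrowsP => i; rewrite rowQ s_sigma; exact: (eigenrowsP P mu).1 PA (sigma i).
apply/matrixP => i k; rewrite mulmx_trmx_row !rowQ -mulmx_trmx_row PDPg !mxE.
by rewrite (inj_eq perm_inj).
Qed.

End WeightedSpectralTheorem.

Lemma qform_mulmx (R : comPzRingType) N (M Q : 'M[R]_N) (c : 'rV[R]_N) :
  qform M (c *m Q) = qform (Q *m M *m Q^T) c.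
Proof. by rewrite /qform trmx_mul !mulmxA. Qed.

Lemma sum_weighted_le (R : numDomainType) (I : finType) (a b : I -> R) t :
  (forall i, 0 <= a i) -> (forall i, a i != 0 -> b i <= t) ->
  \sum_i a i * b i <= t * \sum_i a i.
Proof.
move=> a_ge0 bt; rewrite mulr_sumr; apply: ler_sum => i _.
have [->|ai0] := eqVneq (a i) 0; first by rewrite mul0r mulr0.
by rewrite mulrC ler_wpM2r ?bt.
Qed.

Lemma sum_weighted_ge (R : numDomainType) (I : finType) (a b : I -> R) t :
  (forall i, 0 <= a i) -> (forall i, a i != 0 -> t <= b i) ->
  t * \sum_i a i <= \sum_i a i * b i.
Proof.
move=> a_ge0 tb; rewrite mulr_sumr; apply: ler_sum => i _.
have [->|ai0] := eqVneq (a i) 0; first by rewrite mul0r mulr0.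
by rewrite mulrC ler_wpM2l ?tb.
Qed.

Record selfadjoint_spectrum (R : realFieldType) N (A : 'M[R]_N) (d : 'I_N -> R)
    (lam : seq R) : Prop := SelfadjointSpectrum {
  spectrum_weight_gt0 : forall i, 0 < d i;
  spectrum_sym : (A *m diag_mx (\row_i d i))^T = A *m diag_mx (\row_i d i);
  spectrum_char_poly : char_poly A = \prod_(x <- lam) ('X - x%:P);
  spectrum_sorted : sorted <=%R lam }.

Section CourantFischer.
Variables (R : realFieldType) (N : nat) (A : 'M[R]_N) (d : 'I_N -> R) (lam : seq R).
Hypothesis spec : selfadjoint_spectrum A d lam.
Local Notation D := (diag_mx (\row_i d i)).
Local Notation qA := (qform (A *m D)).
Local Notation qD := (qform D).

Lemma size_spectrum : size lam = N.
Proof.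
by have := size_char_poly A; rewrite (spectrum_char_poly spec) size_prod_XsubC => -[].
Qed.

Lemma spectrum_homo i j : (i <= j)%N -> (j < N)%N -> lam`_i <= lam`_j.
Proof.
move=> ij jN; apply: (sorted_leq_nth le_trans le_refl 0 (spectrum_sorted spec));
  by rewrite ?inE ?size_spectrum // (leq_ltn_trans ij jN).
Qed.

Lemma qform_eigencoords (Q : 'M[R]_N) (g : 'I_N -> R) (c : 'rV[R]_N) :
  Q *m A = diag_mx (\row_i lam`_i) *m Q -> Q *m D *m Q^T = diag_mx (\row_i g i) ->
  qA (c *m Q) = \sum_i c 0 i ^+ 2 * g i * lam`_i /\
  qD (c *m Q) = \sum_i c 0 i ^+ 2 * g i.
Proof.
move=> QA QDQ; rewrite !qform_mulmx QDQ; split; last exact: qform_diag.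
rewrite mulmxA QA -!mulmxA (mulmxA Q) QDQ mulmx_diag qform_diag.
by apply: eq_bigr => i _; rewrite !mxE; ring.
Qed.

Lemma rayleigh_le_subspace k : (k <= N)%N -> exists X : 'M[R]_N,
  (k <= \rank X)%N /\ forall x, (x <= X)%MS -> qA x <= lam`_k.-1 * qD x.
Proof.
move=> kN; have [Q [g [QU QA QDQ g_gt0]]] :=
  weighted_spectral (spectrum_weight_gt0 spec) (spectrum_sym spec)
    (spectrum_char_poly spec).
exists (pid_mx k *m Q); split.
  by rewrite mxrankMfree ?row_free_unit // rank_pid_mx.
move=> x /submxP[y ->]; rewrite mulmxA.
have [-> ->] := qform_eigencoords (y *m pid_mx k) QA QDQ.
apply: sum_weighted_le => [i|i]; first by rewrite mulr_ge0 ?sqr_ge0 ?ltW.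
rewrite row_mul_pid_mx; case: ifP => ik; last by rewrite expr2 !mul0r eqxx.
by move=> _; apply: spectrum_homo; lia.
Qed.

Lemma spectrum_le_rayleigh k (X : 'M[R]_N) t : (0 < k)%N -> (k <= \rank X)%N ->
  (forall x, (x <= X)%MS -> qA x <= t * qD x) -> lam`_k.-1 <= t.
Proof.
move=> k_gt0 kX Xt; have kN : (k <= N)%N := leq_trans kX (rank_leq_col X).
have [Q [g [QU QA QDQ g_gt0]]] :=
  weighted_spectral (spectrum_weight_gt0 spec) (spectrum_sym spec)
    (spectrum_char_poly spec).
pose Y := copid_mx k.-1 *m Q.
have rankY : \rank Y = (N - k.-1)%N.
  by rewrite mxrankMfree ?row_free_unit // rank_copid_mx //; lia.
have XY0 : (X :&: Y)%MS != 0.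
  rewrite -mxrank_eq0 -lt0n.
  by have := mxrank_sum_cap X Y; have := rank_leq_col (X + Y)%MS; lia.
pose x := nz_row (X :&: Y)%MS; have x0 : x != 0 by rewrite nz_row_eq0.
have xX : (x <= X)%MS := submx_trans (nz_row_sub _) (capmxSl _ _).
have /submxP[y xE] : (x <= Y)%MS := submx_trans (nz_row_sub _) (capmxSr _ _).
have lam_x : lam`_k.-1 * qD x <= qA x.
  rewrite xE mulmxA; have [-> ->] := qform_eigencoords (y *m copid_mx k.-1) QA QDQ.
  apply: sum_weighted_ge => [i|i]; first by rewrite mulr_ge0 ?sqr_ge0 ?ltW.
  rewrite row_mul_copid_mx; case: ifP => ik; last by rewrite expr2 !mul0r eqxx.
  by move=> _; apply: spectrum_homo.
have := le_trans lam_x (Xt x xX).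
by rewrite ler_pM2r // (qform_weight_gt0 (spectrum_weight_gt0 spec)).
Qed.

Lemma spectrum_ge0 : (forall x, 0 <= qA x) -> forall i, (i < N)%N -> 0 <= lam`_i.
Proof.
move=> qA_ge0 i iN; have [X [rankX Xlam]] := rayleigh_le_subspace iN.
have x0 : nz_row X != 0 by rewrite nz_row_eq0 -mxrank_eq0 -lt0n (leq_trans _ rankX).
have := le_trans (qA_ge0 _) (Xlam _ (nz_row_sub X)).
by rewrite pmulr_lge0 // (qform_weight_gt0 (spectrum_weight_gt0 spec)).
Qed.

Lemma spectrum_le t : (forall x, qA x <= t * qD x) ->
  forall i, (i < N)%N -> lam`_i <= t.
Proof.
move=> qAt i iN; apply: (@spectrum_le_rayleigh i.+1 1%:M) => //.
by rewrite mxrank1.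
Qed.

End CourantFischer.

Lemma spectrum_interlace (R : realFieldType) N (A1 A2 Z : 'M[R]_N)
    (d1 d2 : 'I_N -> R) (lam1 lam2 : seq R) c k :
  selfadjoint_spectrum A1 d1 lam1 -> selfadjoint_spectrum A2 d2 lam2 ->
  (N - c <= \rank Z)%N -> (0 < k)%N -> (k + c <= N)%N -> 0 <= lam1`_(k + c).-1 ->
  (forall x, (x <= Z)%MS ->
     qform (A2 *m diag_mx (\row_i d2 i)) x <= qform (A1 *m diag_mx (\row_i d1 i)) x /\
     qform (diag_mx (\row_i d1 i)) x <= qform (diag_mx (\row_i d2 i)) x) ->
  lam2`_k.-1 <= lam1`_(k + c).-1.
Proof.
move=> spec1 spec2 rankZ k_gt0 kcN lam_ge0 Zcmp.
have [X [rankX Xlam]] := rayleigh_le_subspace spec1 kcN.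
apply: (@spectrum_le_rayleigh _ _ _ _ _ spec2 k (X :&: Z)%MS) => // [|x xXZ].
  by have := mxrank_sum_cap X Z; have := rank_leq_col (X + Z)%MS; lia.
have [qA21 qD12] := Zcmp x (submx_trans xXZ (capmxSr _ _)).
apply: le_trans qA21 (le_trans (Xlam x (submx_trans xXZ (capmxSl _ _))) _).
exact: ler_wpM2l.
Qed.

Lemma sqr_sum_le_card (R : realFieldType) (T : finType) (G : {set T}) (f : T -> R) :
  (\sum_(u in G) f u) ^+ 2 <= #|G|%:R * \sum_(u in G) f u ^+ 2.
Proof.
set S := \sum_(u in G) f u; set S2 := \sum_(u in G) f u ^+ 2.
have inner i : \sum_(j in G) (f i - f j) ^+ 2 = #|G|%:R * f i ^+ 2 - 2%:R * S * f i + S2.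
  rewrite (eq_bigr (fun j => f i ^+ 2 - 2%:R * f i * f j + f j ^+ 2)); last by move=> j _; ring.
  rewrite !big_split /= sumrN sumr_const -mulr_natl -mulr_sumr -/S -/S2; ring.
have : 0 <= \sum_(i in G) \sum_(j in G) (f i - f j) ^+ 2.
  by apply: sumr_ge0 => i _; apply: sumr_ge0 => j _; exact: sqr_ge0.
rewrite (eq_bigr _ (fun i _ => inner i)) !big_split /= sumrN -!mulr_sumr sumr_const.
rewrite -/S -/S2 -mulr_natl; lra.
Qed.

Section Cochains.
Variables (R : realFieldType) (m : nat).
Local Notation V := 'I_m.
Implicit Types (A B L : {set {set V}}) (F G : {set V}).

(* A row vector indexed by the faces of [A] (via [enum_val]) read as a cochain, zero outside [A]. *)
Definition cochain_of A (x : 'rV[R]_#|A|) : {set V} -> R :=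
  fun F => \sum_a x 0 a * (F == enum_val a)%:R.

Lemma cochain_of_enum_val A (x : 'rV[R]_#|A|) a : cochain_of x (enum_val a) = x 0 a.
Proof.
rewrite /cochain_of (bigD1 a) //= eqxx mulr1 big1 ?addr0 // => b ba.
by rewrite (inj_eq enum_val_inj) eq_sym (negbTE ba) mulr0.
Qed.

Lemma cochain_of_row A (f : {set V} -> R) F :
  cochain_of (\row_a f (enum_val a) : 'rV_#|A|) F = (F \in A)%:R * f F.
Proof.
rewrite /cochain_of (eq_bigr (fun a => (F == enum_val a)%:R * f (enum_val a))); last first.
  by move=> a _; rewrite mxE mulrC.
rewrite -(big_enum_val (fun G => (F == G)%:R * f G)) /=.
have [FA|FA] := boolP (F \in A).
  rewrite (bigD1 F) //= eqxx mul1r big1 ?addr0 // => G /andP[_ /negbTE GF].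
  by rewrite eq_sym GF mul0r.
rewrite mul0r big1 // => G GA; case: eqP => [FG|_]; last by rewrite mul0r.
by rewrite FG GA in FA.
Qed.

Definition incidence_mx A B : 'M[R]_(#|A|, #|B|) :=
  \matrix_(a, b) (enum_val a == enum_val b)%:R.

Lemma mul_incidence_mx A B (x : 'rV[R]_#|A|) :
  x *m incidence_mx A B = \row_b cochain_of x (enum_val b).
Proof. by apply/rowP => b; rewrite !mxE; apply: eq_bigr => a _; rewrite mxE eq_sym. Qed.

Lemma mul_cobound_mx L j (x : 'rV[R]_#|faces L j|) :
  x *m cobound_mx R L j = \row_g cobound (cochain_of x) (enum_val g).
Proof.
apply/rowP => g; rewrite !mxE /cobound.
under eq_bigr do rewrite mxE /cobound mulr_sumr.
rewrite exchange_big /=; apply: eq_bigr => u _; rewrite /cochain_of mulr_sumr.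
by apply: eq_bigr => a _; rewrite /indicator; case: (_ == _) => /=; ring.
Qed.

Lemma faces_setD1 L j G u : simplicial_complex L ->
  G \in faces L j.+1 -> u \in G -> G :\ u \in faces L j.
Proof.
move=> Lsc; rewrite !inE => /andP[GL /eqP cG] uG.
have cGu : #|G :\ u| = j.+1 by move: cG; rewrite (cardsD1 u G) uG add1n => -[].
rewrite cGu eqxx andbT (Lsc.2 G) ?subD1set //.
by apply/eqP => G0; rewrite G0 cards0 in cGu.
Qed.

Lemma cobound_restrict L j (f : {set V} -> R) G :
  simplicial_complex L -> G \in faces L j.+1 ->
  cobound (fun F => (F \in faces L j)%:R * f F) G = cobound f G.
Proof. by move=> Lsc GL; apply: eq_bigr => u uG; rewrite faces_setD1 // mul1r. Qed.

Lemma cobound_eq0 L j (f : {set V} -> R) G :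
  simplicial_complex L -> G \in faces L j.+1 -> {in faces L j, forall F, f F = 0} ->
  cobound f G = 0.
Proof. by move=> Lsc GL f0; apply: big1 => u uG; rewrite f0 ?mulr0 // faces_setD1. Qed.

Lemma faces_in L j F : F \in faces L j -> F \in L.
Proof. by rewrite inE => /andP[]. Qed.

Lemma faces_sub L L' j F : F \in faces L j -> F \in L' -> F \in faces L' j.
Proof. by rewrite !inE => /andP[_ ->] ->. Qed.

Lemma sum_setD1_eq F G : #|G| = #|F|.+1 ->
  \sum_(u in G) ((G :\ u == F)%:R : R) = (F \subset G)%:R.
Proof.
move=> cG; case FG: (F \subset G); last first.
  by apply: big1 => u _; case: eqP => // GuF; rewrite -GuF subD1set in FG.
have /cards1P[u0 GF] : #|G :\: F| == 1%N.
  by rewrite cardsD (setIidPr FG) cG subSn // subnn.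
have /setDP[u0G u0F] : u0 \in G :\: F by rewrite GF set11.
rewrite (bigD1 u0) //= big1 => [|u /andP[uG uu0]].
  suff -> : G :\ u0 == F by rewrite addr0.
  rewrite eq_sym eqEcard; apply/andP; split.
    apply/subsetP => x xF; rewrite !inE (subsetP FG) // andbT.
    by apply: contraNneq u0F => <-.
  by move: cG; rewrite (cardsD1 u0 G) u0G add1n => -[->].
case: eqP => // GuF; have uF : u \in F.
  by apply: contraNT uu0 => uF; rewrite -in_set1 -GF inE uF.
by move: uF; rewrite -GuF setD11.
Qed.

Lemma sgnv_sqr G (u : V) : sgnv R G u ^+ 2 = 1.
Proof. by rewrite /sgnv -exprAC expr2 mulrNN mulr1 expr1n. Qed.

End Cochains.

Section CoboundaryGram.
Variables (R : realFieldType) (m n : nat).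
Local Notation V := 'I_m.
Variable K : {set {set V}}.
Hypothesis Ksc : simplicial_complex K.
Local Notation NN := #|faces K n|.
Local Notation MM := #|faces K n.+1|.
Local Notation Bc := (cobound_mx R K n).

Lemma sum_incident_faces (h : {set V} -> {set V} -> V -> R) :
  \sum_(G in faces K n.+1) \sum_(u in G) h G (G :\ u) u =
  \sum_(F in faces K n) \sum_(v | (v \notin F) && (v |: F \in K)) h (v |: F) F v.
Proof.
rewrite !pair_big_dep /=.
rewrite (reindex_onto (fun p : {set V} * V => (p.2 |: p.1, p.2))
                      (fun q : {set V} * V => (q.1 :\ q.2, q.2))) /=; last first.
  by move=> [G u] /andP[_ uG] /=; rewrite setD1K.
apply: eq_big => [[F v]|[F v]] /=; last by move=> /andP[_ /eqP[->]].
have setU1K_eq : ((v |: F) :\ v == F) = (v \notin F).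
  have [vF|vF] := boolP (v \in F); last by rewrite setU1K ?eqxx.
  by apply/negbTE/eqP => E; have := setD11 v (v |: F); rewrite E vF.
rewrite setU11 andbT xpair_eqE eqxx andbT setU1K_eq /faces !inE.
have [vF|vF] := boolP (v \in F); rewrite ?andbF //= andbT cardsU1 vF add1n eqSS.
have [FK|FK] := boolP (v |: F \in K); rewrite ?andbF //= andbT.
case: eqP => cF; rewrite ?andbT ?andbF // (Ksc.2 (v |: F)) ?subsetUr //.
by apply/eqP => F0; rewrite F0 cards0 in cF.
Qed.

Lemma sum_cofaces (w : {set V} -> R) F : F \in faces K n ->
  \sum_(v | (v \notin F) && (v |: F \in K)) w (v |: F) =
  \sum_(G in faces K n.+1 | F \subset G) w G.
Proof.
move=> FK; have := FK; rewrite inE => /andP[_ /eqP cF].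
transitivity (\sum_(F' in faces K n) \sum_(v | (v \notin F') && (v |: F' \in K))
    w (v |: F') * (F' == F)%:R).
  rewrite (bigD1 F) //= [X in _ + X]big1 ?addr0 => [|F' /andP[_ /negbTE F'F]].
    by apply: eq_bigr => v _; rewrite eqxx mulr1.
  by apply: big1 => v _; rewrite F'F mulr0.
rewrite -(sum_incident_faces (fun G F' _ => w G * (F' == F)%:R)) big_mkcondr /=.
apply: eq_bigr => G; rewrite inE => /andP[_ /eqP cG].
by rewrite -mulr_sumr sum_setD1_eq ?cG ?cF //; case: (F \subset G); rewrite ?mulr1 ?mulr0.
Qed.

Definition cobound_gram (w : {set V} -> R) : 'M[R]_NN :=
  Bc *m diag_mx (\row_g w (enum_val g)) *m Bc^T.

Lemma cobound_gram_sym w : (cobound_gram w)^T = cobound_gram w.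
Proof. by rewrite /cobound_gram !trmx_mul trmxK tr_diag_mx mulmxA. Qed.

Lemma qform_cobound_gram w (x : 'rV[R]_NN) : qform (cobound_gram w) x =
  \sum_(g < MM) w (enum_val g) * cobound (cochain_of x) (enum_val g) ^+ 2.
Proof.
rewrite /qform /cobound_gram !mulmxA -(mulmxA _ _ x^T) -trmx_mul mul_cobound_mx.
by rewrite mul_mx_diag !mxE; apply: eq_bigr => g _; rewrite !mxE; ring.
Qed.

Lemma cobound_gram_coface w (a b : 'I_NN) : cobound_gram w b a =
  \sum_(v | (v \notin enum_val b) && (v |: enum_val b \in K))
     w (v |: enum_val b) * sgnv R (v |: enum_val b) v *
     cobound (indicator R (enum_val a)) (v |: enum_val b).
Proof.
have cob_ind (F G : {set V}) :
    cobound (indicator R F) G = \sum_(u in G) sgnv R G u * (G :\ u == F)%:R.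
  by apply: eq_bigr => u _; rewrite /indicator; case: eqP.
transitivity (\sum_(G in faces K n.+1) \sum_(u in G)
   w G * sgnv R G u * (G :\ u == enum_val b)%:R * cobound (indicator R (enum_val a)) G).
  rewrite /cobound_gram mul_mx_diag !mxE [RHS]big_enum_val /=.
  apply: eq_bigr => G _; rewrite !mxE (cob_ind (enum_val b)) !mulr_suml.
  by apply: eq_bigr => u _; ring.
rewrite (sum_incident_faces (fun G F u => w G * sgnv R G u * (F == enum_val b)%:R *
   cobound (indicator R (enum_val a)) G)).
rewrite (bigD1 (enum_val b)) ?enum_valP //= [X in _ + X]big1 ?addr0 => [|F /andP[_ /negbTE Fb]].
  by apply: eq_bigr => v _; rewrite eqxx mulr1.
by apply: big1 => v _; rewrite Fb mulr0 mul0r.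
Qed.

Lemma qform_cobound_gram_ge0 w (x : 'rV[R]_NN) :
  (forall g : 'I_MM, 0 <= w (enum_val g)) -> 0 <= qform (cobound_gram w) x.
Proof.
by move=> w_ge0; rewrite qform_cobound_gram sumr_ge0 // => g _; rewrite mulr_ge0 ?sqr_ge0.
Qed.

Lemma up_laplacian_gram (w : {set V} -> R) (dw : 'I_NN -> R) :
  (forall a : 'I_NN, w (enum_val a) != 0 -> dw a = w (enum_val a)) ->
  (forall a : 'I_NN, w (enum_val a) = 0 -> forall v, v \notin enum_val a ->
     v |: enum_val a \in K -> w (v |: enum_val a) = 0) ->
  (up_laplacian_mx K w n)^T *m diag_mx (\row_a dw a) = cobound_gram w.
Proof.
move=> dwE w0; apply/matrixP => a b.
rewrite -cobound_gram_sym [RHS]mxE cobound_gram_coface mul_mx_diag !mxE.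
rewrite /up_laplacian /cobound_adj; case: eqP => [wb0|/eqP wb].
  by rewrite mul0r big1 // => v /andP[vF vK]; rewrite w0 // !mul0r.
by rewrite dwE // mulr_suml; apply: eq_bigr => v _; field.
Qed.

Lemma qform_cobound_gram_le (w : {set V} -> R) (dw : 'I_NN -> R) (x : 'rV[R]_NN) :
  (forall G, G \in faces K n.+1 -> 0 <= w G) ->
  (forall a : 'I_NN, \sum_(v | (v \notin enum_val a) && (v |: enum_val a \in K))
     w (v |: enum_val a) <= dw a) ->
  qform (cobound_gram w) x <= n.+2%:R * qform (diag_mx (\row_a dw a)) x.
Proof.
move=> w_ge0 cofaces_le; set f := cochain_of x.
have cob_le G : G \in faces K n.+1 ->
    cobound f G ^+ 2 <= n.+2%:R * \sum_(u in G) f (G :\ u) ^+ 2.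
  rewrite inE => /andP[_ /eqP cG].
  apply: le_trans (sqr_sum_le_card G (fun u => sgnv R G u * f (G :\ u))) _.
  rewrite cG ler_wpM2l // le_eqVlt; apply/orP; left; apply/eqP.
  by apply: eq_bigr => u _; rewrite exprMn sgnv_sqr mul1r.
rewrite qform_cobound_gram qform_diag.
apply: (@le_trans _ _ (\sum_(g < MM) w (enum_val g) *
    (n.+2%:R * \sum_(u in enum_val g) f (enum_val g :\ u) ^+ 2))).
  by apply: ler_sum => g _; rewrite ler_wpM2l ?w_ge0 ?cob_le ?enum_valP.
have -> : \sum_(g < MM) w (enum_val g) *
    (n.+2%:R * \sum_(u in enum_val g) f (enum_val g :\ u) ^+ 2) =
    n.+2%:R * \sum_(G in faces K n.+1) \sum_(u in G) w G * f (G :\ u) ^+ 2.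
  rewrite [in RHS]big_enum_val /= mulr_sumr; apply: eq_bigr => g _.
  by rewrite mulrCA mulr_sumr.
rewrite (sum_incident_faces (fun G F _ => w G * f F ^+ 2)) ler_wpM2l //.
rewrite big_enum_val /=; apply: ler_sum => a _.
by rewrite -mulr_suml mulrC /f cochain_of_enum_val ler_wpM2l ?sqr_ge0.
Qed.

End CoboundaryGram.

Section ProperDifference.
Variables (R : realFieldType) (m n : nat).
Local Notation V := 'I_m.
Variables (K H : {set {set V}}) (wK wH : {set V} -> R).
Hypotheses (Ksc : simplicial_complex K) (Kw : weighted K wK).
Hypotheses (Hsc : simplicial_complex H) (Hw : weighted H wH) (HK : H \subset K).
Hypothesis HwK : forall F, F \in H -> wH F <= wK F.

Definition diff_weight F := wK F - (if F \in H then wH F else 0).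
Local Notation wL := diff_weight.
Hypothesis Lsc : simplicial_complex [set F in K | 0 < wL F].

Local Notation NN := #|faces K n|.
Local Notation MM := #|faces K n.+1|.

Lemma diff_weight_ge0 G : G \in K -> 0 <= wL G.
Proof.
move=> GK; rewrite /wL; case: ifP => GH; last by rewrite subr0 ltW ?Kw.
by rewrite subr_ge0 HwK.
Qed.

Lemma diff_weight_le G : wL G <= wK G.
Proof.
rewrite /wL; case: ifP => GH; last by rewrite subr0.
by rewrite lerBlDr lerDl ltW ?Hw.
Qed.

Lemma diff_weight_notin G : G \notin H -> wL G = wK G.
Proof. by rewrite /wL => /negbTE ->; rewrite subr0. Qed.

Lemma diff_weight_eq0_up F G : F \in K -> F != set0 -> G \in K -> F \subset G ->
  wL F = 0 -> wL G = 0.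
Proof.
move=> FK F0 GK FG wF; apply/eqP; rewrite eq_le diff_weight_ge0 // andbT leNgt.
apply/negP => wG; have : F \in [set F in K | 0 < wL F].
  by apply: (Lsc.2 G) => //; rewrite inE GK wG.
by rewrite inE wF ltxx andbF.
Qed.

Definition dK (a : 'I_NN) := wK (enum_val a).

(* The up-Laplacian of [wL] vanishes on faces of zero [wL]-weight, so any positive weight
   there makes it self-adjoint; choosing [wK] keeps [dL <= dK]. *)
Definition dL (a : 'I_NN) :=
  if wL (enum_val a) == 0 then wK (enum_val a) else wL (enum_val a).

Lemma dK_gt0 a : 0 < dK a.
Proof. exact/Kw/(faces_in (enum_valP a)). Qed.

Lemma dL_gt0 a : 0 < dL a.
Proof.
rewrite /dL; case: eqP => [_|/eqP wa]; first exact: dK_gt0.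
by rewrite lt_def wa diff_weight_ge0 // (faces_in (enum_valP a)).
Qed.

Lemma dL_le a : dL a <= dK a.
Proof. by rewrite /dL /dK; case: eqP => // _; exact: diff_weight_le. Qed.

Lemma up_laplacian_gramK :
  (up_laplacian_mx K wK n)^T *m diag_mx (\row_a dK a) = cobound_gram n K wK.
Proof.
apply: (up_laplacian_gram Ksc) => // a wa0.
by have := dK_gt0 a; rewrite /dK wa0 ltxx.
Qed.

Lemma up_laplacian_gramL :
  (up_laplacian_mx K wL n)^T *m diag_mx (\row_a dL a) = cobound_gram n K wL.
Proof.
apply: (up_laplacian_gram Ksc) => [a /negbTE wa|a wa v vF vK]; first by rewrite /dL wa.
have /andP[aK /eqP ca] : (enum_val a \in K) && (#|enum_val a| == n.+1).
  by have := enum_valP a; rewrite inE.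
apply: diff_weight_eq0_up wa => //; last exact: subsetUr.
by apply/eqP => a0; rewrite a0 cards0 in ca.
Qed.

Local Notation AK := (up_laplacian_mx K wK n)^T.
Local Notation AL := (up_laplacian_mx K wL n)^T.
Local Notation DK := (diag_mx (\row_a dK a)).
Local Notation DL := (diag_mx (\row_a dL a)).

Lemma spectrumK lam : eigenvalue_list (up_laplacian_mx K wK n) lam ->
  selfadjoint_spectrum AK dK lam.
Proof.
case=> lam_sorted charK; split => //; first exact: dK_gt0.
  by rewrite up_laplacian_gramK cobound_gram_sym.
by rewrite char_poly_trmx.
Qed.

Lemma spectrumL theta : eigenvalue_list (up_laplacian_mx K wL n) theta ->
  selfadjoint_spectrum AL dL theta.
Proof.
case=> theta_sorted charL; split => //; first exact: dL_gt0.
  by rewrite up_laplacian_gramL cobound_gram_sym.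
by rewrite char_poly_trmx.
Qed.

Lemma spectrumK_ge0 lam : eigenvalue_list (up_laplacian_mx K wK n) lam ->
  forall i, (i < NN)%N -> 0 <= lam`_i.
Proof.
move=> /spectrumK spec; apply: (spectrum_ge0 spec) => x.
rewrite up_laplacian_gramK qform_cobound_gram_ge0 // => g.
exact/ltW/Kw/(faces_in (enum_valP g)).
Qed.

Lemma spectrumL_ge0 theta : eigenvalue_list (up_laplacian_mx K wL n) theta ->
  forall i, (i < NN)%N -> 0 <= theta`_i.
Proof.
move=> /spectrumL spec; apply: (spectrum_ge0 spec) => x.
rewrite up_laplacian_gramL qform_cobound_gram_ge0 // => g.
exact/diff_weight_ge0/(faces_in (enum_valP g)).
Qed.

Lemma qform_diff_gram_eq (x : 'rV[R]_NN) :
  {in faces H n.+1, forall G, cobound (cochain_of x) G = 0} ->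
  qform (cobound_gram n K wL) x = qform (cobound_gram n K wK) x.
Proof.
move=> cob0; rewrite !qform_cobound_gram; apply: eq_bigr => g _.
have [gH|gH] := boolP (enum_val g \in H); last by rewrite diff_weight_notin.
by rewrite cob0 ?(faces_sub (enum_valP g)) // expr2 !mulr0.
Qed.

Lemma qform_dL_eq (x : 'rV[R]_NN) :
  {in faces H n, forall F, cochain_of x F = 0} -> qform DL x = qform DK x.
Proof.
move=> x0; rewrite !qform_diag; apply: eq_bigr => a _.
have [aH|aH] := boolP (enum_val a \in H).
  by rewrite -cochain_of_enum_val x0 ?(faces_sub (enum_valP a)) // expr2 !mul0r.
by rewrite /dL /dK diff_weight_notin //; case: eqP.
Qed.

Lemma qform_dL_le (x : 'rV[R]_NN) : qform DL x <= qform DK x.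
Proof. by rewrite !qform_diag; apply: ler_sum => a _; rewrite ler_wpM2l ?sqr_ge0 ?dL_le. Qed.

Lemma kermx_incidence_eq0 (x : 'rV[R]_NN) :
  (x <= kermx (incidence_mx R (faces K n) (faces H n)))%MS ->
  {in faces H n, forall F, cochain_of x F = 0}.
Proof.
move=> /sub_kermxP; rewrite mul_incidence_mx => /rowP x0 F FH.
by have := x0 (enum_rank_in FH F); rewrite !mxE enum_rankK_in.
Qed.

Lemma kermx_restricted_cobound_eq0 (x : 'rV[R]_NN) :
  (x <= kermx (incidence_mx R (faces K n) (faces H n) *m cobound_mx R H n *m
               incidence_mx R (faces H n.+1) (faces K n.+1)))%MS ->
  {in faces H n.+1, forall G, cobound (cochain_of x) G = 0}.
Proof.
move=> /sub_kermxP; rewrite !mulmxA mul_incidence_mx mul_cobound_mx mul_incidence_mx.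
move=> /rowP x0 G GH; have GK : G \in faces K n.+1.
  by rewrite (faces_sub GH) // (subsetP HK) // (faces_in GH).
have := x0 (enum_rank_in GK G); rewrite !mxE enum_rankK_in // cochain_of_row GH mul1r.
move=> cob0; rewrite -(cobound_restrict _ Hsc GH) -[RHS]cob0.
by apply: eq_bigr => u _; rewrite cochain_of_row.
Qed.

Lemma spectrum_upper lam theta k :
  eigenvalue_list (up_laplacian_mx K wK n) lam ->
  eigenvalue_list (up_laplacian_mx K wL n) theta ->
  (0 < k)%N -> (k + #|faces H n| <= NN)%N ->
  theta`_k.-1 <= lam`_(k + #|faces H n|).-1.
Proof.
move=> elK elL k_gt0 kN.
have rankZ : (NN - #|faces H n| <=
    \rank (kermx (incidence_mx R (faces K n) (faces H n))))%N.
  by rewrite mxrank_ker leq_sub2l ?rank_leq_col.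
apply: (spectrum_interlace (spectrumK elK) (spectrumL elL) rankZ k_gt0 kN) => [|x xZ].
  by apply: (spectrumK_ge0 elK); lia.
have x0 := kermx_incidence_eq0 xZ.
rewrite up_laplacian_gramK up_laplacian_gramL qform_diff_gram_eq ?qform_dL_eq //.
by move=> G GH; apply: cobound_eq0 Hsc GH x0.
Qed.

Lemma spectrum_lower lam theta k :
  eigenvalue_list (up_laplacian_mx K wK n) lam ->
  eigenvalue_list (up_laplacian_mx K wL n) theta ->
  (\rank (cobound_mx R H n) < k)%N -> (k <= NN)%N ->
  lam`_(k - \rank (cobound_mx R H n)).-1 <= theta`_k.-1.
Proof.
move=> elK elL rk kN; set r := \rank _.
have rankZ : (NN - r <= \rank (kermx (incidence_mx R (faces K n) (faces H n) *m
    cobound_mx R H n *m incidence_mx R (faces H n.+1) (faces K n.+1))))%N.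
  by rewrite mxrank_ker leq_sub2l // (leq_trans (mxrankM_maxl _ _)) ?mxrankM_maxr.
suff : lam`_(k - r).-1 <= theta`_(k - r + r).-1 by rewrite subnK // ltnW.
apply: (spectrum_interlace (spectrumL elL) (spectrumK elK) rankZ) => [|||x xZ].
- by rewrite subn_gt0.
- by rewrite subnK // ltnW.
- by apply: (spectrumL_ge0 elL); lia.
rewrite up_laplacian_gramK up_laplacian_gramL qform_diff_gram_eq ?qform_dL_le //.
exact: kermx_restricted_cobound_eq0.
Qed.

Hypothesis nL : normalizing K wL n.

Lemma coface_weight_le (a : 'I_NN) :
  \sum_(v | (v \notin enum_val a) && (v |: enum_val a \in K)) wL (v |: enum_val a) <= dL a.
Proof.
case: (pickP (fun v => (v \notin enum_val a) && (v |: enum_val a \in K))) => [v0|none].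
  case/andP=> v0a v0K; have nfacet : ~ is_facet K (enum_val a).
    case=> _ /(_ _ v0K); apply; rewrite properEneq subsetUr andbT.
    by apply: contraNneq v0a => ->; exact: setU11.
  rewrite (sum_cofaces Ksc _ (enum_valP a)) -(nL (enum_valP a) nfacet) /dL.
  by case: eqP => [->|//]; exact/ltW/dK_gt0.
by rewrite big_pred0 //; exact/ltW/dL_gt0.
Qed.

Lemma spectrumL_le theta : eigenvalue_list (up_laplacian_mx K wL n) theta ->
  forall i, (i < NN)%N -> theta`_i <= n.+2%:R.
Proof.
move=> /spectrumL spec; apply: (spectrum_le spec) => x.
rewrite up_laplacian_gramL; apply: (qform_cobound_gram_le Ksc) => [G GK|a].
  exact/diff_weight_ge0/(faces_in GK).
exact: coface_weight_le.
Qed.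

End ProperDifference.

Lemma codim_top_cohomology (R : realFieldType) m n (H : {set {set 'I_m}}) :
  dimension H n.+1 ->
  (#|faces H n.+1|%:Z - (cohomology_dim R H n.+1)%:Z)%R = (\rank (cobound_mx R H n))%:Z.
Proof.
case=> _ Hdim; have noface : #|faces H n.+2| = 0%N.
  apply/eqP; rewrite cards_eq0; apply/eqP/setP => F; rewrite !inE.
  by apply/negbTE/andP => -[/Hdim FH /eqP cF]; rewrite cF ltnn in FH.
have rank0 : \rank (cobound_mx R H n.+1) = 0%N.
  by apply/eqP; rewrite -leqn0 -noface rank_leq_col.
rewrite /cohomology_dim mxrank_ker rank0 subn0 subzn ?leq_subr // subKn //.
exact: rank_leq_col.
Qed.

Lemma ext_eig_le0 (R : realFieldType) n (s : seq R) (j : int) : (j <= 0)%R ->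
  ext_eig n s j = 0.
Proof. by case: j => [p|p] //=; rewrite lez_nat leqn0 => /eqP ->. Qed.

Theorem theorem2p11 (R : realFieldType) (m n : nat)
  (K H : {set {set 'I_m}}) (wK wH : {set 'I_m} -> R) (lam theta : seq R) :
  simplicial_complex K -> dimension K n.+1 -> weighted K wK ->
  simplicial_complex H -> dimension H n.+1 -> weighted H wH ->
  H \subset K -> (forall F, F \in H -> wH F <= wK F) ->
  let wL := fun F => wK F - (if F \in H then wH F else 0) in
  simplicial_complex [set F in K | 0 < wL F] ->
  normalizing K wK n -> normalizing K wL n ->
  eigenvalue_list (up_laplacian_mx K wK n) lam ->
  eigenvalue_list (up_laplacian_mx K wL n) theta ->
  let N := #|faces K n| in
  let DW : int := (#|faces H n.+1|%:Z - (cohomology_dim R H n.+1)%:Z)%R in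
  let DH : int := #|faces H n|%:Z in
  forall k : nat, (1 <= k <= N)%N ->
    ext_eig n lam (k%:Z - DW) <= nth 0 theta k.-1 /\
    nth 0 theta k.-1 <= ext_eig n lam (k%:Z + DH).
Proof.
move=> Ksc _ Kw Hsc Hdim Hw HK HwK wL Lsc _ nL elK elL N DW DH k /andP[k_gt0 kN].
rewrite /DW codim_top_cohomology // /DH.
have sizeK := size_spectrum (spectrumK Ksc Kw elK).
split.
- have [kr|rk] := leqP k (\rank (cobound_mx R H n)).
    rewrite ext_eig_le0 ?subr_le0 ?lez_nat //.
    by apply: (spectrumL_ge0 Ksc Kw HwK Lsc elL); lia.
  rewrite (subzn (ltnW rk)) /ext_eig subn_eq0 leqNgt rk /= sizeK.
  rewrite (leq_trans (leq_subr _ _) kN).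
  exact: (spectrum_lower Ksc Kw Hsc Hw HK HwK Lsc elK elL).
rewrite -PoszD /ext_eig addn_eq0 (negbTE (lt0n_neq0 k_gt0)) /= sizeK.
case: leqP => kNH; first exact: (spectrum_upper Ksc Kw Hsc HK HwK Lsc elK elL).
by apply: (spectrumL_le Ksc Kw HwK Lsc nL elL); lia.
Qed.
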